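(* Let $S=\{R_0,\dots,R_d\}$ be a scheme on $X$, $\mathbb F$ a field, $x\in X$, $E_a^*=E_a^*(x)$, and let $\mathcal T_0$ be the $\mathbb F$-linear span of $\{E_i^*A_jE_\ell^*:R_i,R_j,R_\ell\in S\}$. If $\mathcal T_0$ is a unital $\mathbb F$-subalgebra of $M_X(\mathbb F)$, then $S$ has no bad pairs.
   Context: Let $X$ be a nonempty finite set. A scheme of class $d$ on $X$ is a partition $S=\{R_0,\dots,R_d\}$ of $X\times X$ into nonempty sets such that $R_0=\{(b,b):b\in X\}$; for each $c$ there is $c'$ with $R_{c'}=\{(f,e):(e,f)\in R_c\}$; and for all $i,j,k$ the intersection number $p_{ij}^k=|\{\ell\in X:(m,\ell)\in R_i,(\ell,n)\in R_j\}|$ does not depend on $(m,n)\in R_k$. The valency is $k_a=p_{aa'}^0$; complex product $R_aR_b=\{R_c:p_{ab}^c>0\}$. For $y\in X$, $yR_a=\{z:(y,z)\in R_a\}$. $A_a\in M_X(\mathbb F)$ is the $(0,1)$ adjacency matrix of $R_a$ and $E_a^*(y)$ is the diagonal $(0,1)$-matrix with ones exactly at positions indexed by $yR_a$. Bad pair: $(u,v)$ is a bad pair of $S$ if there exist an integer $a\ge1$ and $R_{i_b},R_{j_b},R_{\ell_b}\in S$ ($b=0,\dots,a$) with $i_0=u$, $\ell_a=v$, $k_{i_b}=k_{\ell_b}=2$ and $p_{i_bj_b}^{\ell_b}=1$ for all $b$, $\ell_c=i_{c+1}$ for $0\le c\le a-1$, and $|R_{u'}R_v|=1$. *)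

From mathcomp Require Import all_boot all_order all_algebra.
Set Implicit Arguments. Unset Strict Implicit. Unset Printing Implicit Defensive.
Import GRing.Theory.
Local Open Scope ring_scope.

Section Scheme.
Variables (X : finType) (d : nat) (R : 'I_d.+1 -> {set X * X}).

Definition pcount (i j : 'I_d.+1) (m n : X) : nat :=
  #|[set y : X | ((m, y) \in R i) && ((y, n) \in R j)]|.

Definition rel_transpose (c : 'I_d.+1) : {set X * X} :=
  [set e : X * X | (e.2, e.1) \in R c].

Definition is_scheme : Prop :=
  (forall i, R i != set0) /\
  (forall e : X * X, exists i, e \in R i) /\
  (forall i j, i != j -> [disjoint R i & R j]) /\
  R ord0 = [set e : X * X | e.1 == e.2] /\
  (forall c, exists c', R c' = rel_transpose c) /\
  (forall i j k m n m' n', (m, n) \in R k -> (m', n') \in R k ->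
          pcount i j m n = pcount i j m' n').

Definition tr_idx (c : 'I_d.+1) : 'I_d.+1 :=
  odflt c [pick c' | R c' == rel_transpose c].

Definition pnum (i j k : 'I_d.+1) : nat :=
  if [pick e in R k] is Some e then pcount i j e.1 e.2 else 0%N.

Definition valency (a : 'I_d.+1) : nat := pnum a (tr_idx a) ord0.

(* |R_a R_b| : number of relations R_c with p_{ab}^c > 0 *)
Definition cplx_card (a b : 'I_d.+1) : nat :=
  #|[set c : 'I_d.+1 | (0 < pnum a b c)%N]|.

Definition bad_pair (u v : 'I_d.+1) : Prop :=
  exists a : nat, (1 <= a)%N /\
  exists i j l : nat -> 'I_d.+1,
    [/\ i 0%N = u, l a = v,
        (forall b, (b <= a)%N ->
           [/\ valency (i b) = 2%N, valency (l b) = 2%N &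
               pnum (i b) (j b) (l b) = 1%N]),
        (forall c, (c < a)%N -> l c = i c.+1) &
        cplx_card (tr_idx u) v = 1%N].

(* Matrices indexed by X, via the enumeration 'I_#|X| <-> X *)
Variable F : fieldType.

Definition adjmx (a : 'I_d.+1) : 'M[F]_#|X| :=
  \matrix_(r, s) ((enum_val r, enum_val s) \in R a)%:R.

Definition dualidem (x : X) (a : 'I_d.+1) : 'M[F]_#|X| :=
  \matrix_(r, s) ((r == s) && ((x, enum_val r) \in R a))%:R.

Definition inT0 (x : X) (M : 'M[F]_#|X|) : Prop :=
  exists coef : 'I_d.+1 -> 'I_d.+1 -> 'I_d.+1 -> F,
    M = \sum_(i < d.+1) \sum_(j < d.+1) \sum_(l < d.+1)
          coef i j l *: (dualidem x i *m adjmx j *m dualidem x l).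

(* T_0 is a unital subalgebra of M_X(F) (it is a subspace by definition) *)
Definition T0_unital_subalgebra (x : X) : Prop :=
  inT0 x 1%:M /\ (forall M N, inT0 x M -> inT0 x N -> inT0 x (M *m N)).

End Scheme.

From mathcomp Require Import all_boot all_order all_algebra.
Set Implicit Arguments. Unset Strict Implicit. Unset Printing Implicit Defensive.
Import GRing.Theory.
Local Open Scope ring_scope.

(* If p_{ij}^l = 1, then E_i^* A_j E_l^* is the 0/1 matrix of a map from xR_l
   to xR_i, sending z to the unique w in xR_i with (w, z) in R_j.  The chain of
   a bad pair (u, v) multiplies such matrices into the matrix, lying in T_0, of
   a map H from xR_v to xR_u.  Every matrix of T_0 has its (y, z) entry
   determined by the relations containing (x, y), (y, z) and (x, z), and
   |R_{u'} R_v| = 1 puts all of xR_u * xR_v into one relation, so each column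
   z in xR_v of a matrix of T_0 is constant on xR_u.  As k_u = 2, this fails
   for the matrix of H, whose column z has a single 1, at row H z. *)

Section GraphMatrix.
Variables (X : finType) (F : fieldType).

Definition graphmx (D : {set X}) (h : X -> X) : 'M[F]_#|X| :=
  \matrix_(r, s) ((enum_val s \in D) && (enum_val r == h (enum_val s)))%:R.

Lemma mul_graphmx (D1 D2 : {set X}) (h1 h2 : X -> X) :
  {in D2, forall z, h2 z \in D1} ->
  graphmx D1 h1 *m graphmx D2 h2 = graphmx D2 (h1 \o h2).
Proof.
move=> h2D; apply/matrixP => r s; rewrite !mxE /=.
under eq_bigr => k _ do rewrite !mxE.
have [sD2 | _] := boolP (enum_val s \in D2); last first.
  by rewrite big1 // => k _; rewrite andFb mulr0.
rewrite (bigD1 (enum_rank (h2 (enum_val s)))) //= big1 ?addr0 => [|k kh].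
  by rewrite enum_rankK h2D // eqxx mulr1.
have /negbTE -> : enum_val k != h2 (enum_val s).
  by apply: contra kh => /eqP <-; rewrite enum_valK.
by rewrite mulr0.
Qed.

End GraphMatrix.

Section Scheme.
Variables (X : finType) (d : nat) (R : 'I_d.+1 -> {set X * X}).

Definition nbhd (y : X) (a : 'I_d.+1) : {set X} := [set z | (y, z) \in R a].

Definition same_rel (e e' : X * X) : Prop := forall q, (e \in R q) = (e' \in R q).

Hypothesis R_cover : forall e : X * X, exists i, e \in R i.
Hypothesis R_disjoint : forall i j, i != j -> [disjoint R i & R j].
Hypothesis R_diag : R ord0 = [set e : X * X | e.1 == e.2].
Hypothesis R_transpose : forall c, exists c', R c' = rel_transpose R c.
Hypothesis R_regular : forall i j k m n m' n', (m, n) \in R k ->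
  (m', n') \in R k -> pcount R i j m n = pcount R i j m' n'.

Lemma same_rel_mem p e e' : e \in R p -> e' \in R p -> same_rel e e'.
Proof.
move=> ep e'p q; have [-> | qp] := eqVneq q p; first by rewrite ep e'p.
by rewrite (disjointFl (R_disjoint qp) ep) (disjointFl (R_disjoint qp) e'p).
Qed.

Lemma pnumE i j k m n : (m, n) \in R k -> pnum R i j k = pcount R i j m n.
Proof.
move=> mn; rewrite /pnum.
case: pickP => [[m' n'] mn' | /(_ (m, n))]; last by rewrite mn.
exact: R_regular mn' mn.
Qed.

Lemma tr_idxE c : R (tr_idx R c) = rel_transpose R c.
Proof.
rewrite /tr_idx; case: pickP => [c' /eqP // | noc'].
by have [c' c'c] := R_transpose c; move: (noc' c'); rewrite c'c eqxx.
Qed.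

Lemma valencyE y a : valency R a = #|nbhd y a|.
Proof.
rewrite /valency (@pnumE _ _ _ y y); last by rewrite R_diag inE.
by apply: eq_card => z; rewrite !inE tr_idxE inE andbb.
Qed.

(* y itself witnesses p_{u'v}^c > 0 for the relation c of any such pair. *)
Lemma cplx_card1_rel y u v : cplx_card R (tr_idx R u) v = 1%N ->
  exists c, {in nbhd y u & nbhd y v, forall w z, (w, z) \in R c}.
Proof.
move=> /eqP/cards1P [c0 c0E]; exists c0 => w z; rewrite !inE => yw yz.
have [c wzc] := R_cover (w, z).
suff : c \in [set c0] by rewrite inE => /eqP <-.
rewrite -c0E inE (pnumE _ _ wzc) card_gt0; apply/set0Pn; exists y.
by rewrite inE tr_idxE !inE yw yz.
Qed.

Section T0.
Variables (F : fieldType) (x : X).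

Lemma dual_adj_dual_entry i j l r s :
  (dualidem R F x i *m adjmx R F j *m dualidem R F x l) r s =
  ((x, enum_val r) \in R i)%:R * ((enum_val r, enum_val s) \in R j)%:R *
  ((x, enum_val s) \in R l)%:R.
Proof.
rewrite mxE (bigD1 s) //= big1 ?addr0 => [|k /negbTE ks]; rewrite !mxE ?eqxx.
  rewrite (bigD1 r) //= big1 ?addr0 => [|k /negbTE kr]; rewrite !mxE ?eqxx //.
  by rewrite eq_sym kr mul0r.
by rewrite ks mulr0.
Qed.

Lemma inT0_dual_adj_dual i j l :
  inT0 R x (dualidem R F x i *m adjmx R F j *m dualidem R F x l).
Proof.
exists (fun i' j' l' => ((i' == i) && (j' == j) && (l' == l))%:R).
rewrite (bigD1 i) //= [X in _ + X]big1 ?addr0 => [|i' /negbTE i'i]; last first.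
  by apply: big1 => j' _; apply: big1 => l' _; rewrite i'i scale0r.
rewrite (bigD1 j) //= [X in _ + X]big1 ?addr0 => [|j' /negbTE j'j]; last first.
  by apply: big1 => l' _; rewrite j'j andbF scale0r.
rewrite (bigD1 l) //= [X in _ + X]big1 ?addr0 => [|l' /negbTE l'l].
  by rewrite !eqxx scale1r.
by rewrite l'l andbF scale0r.
Qed.

Lemma inT0_entry_same_rel (M : 'M[F]_#|X|) y1 z1 y2 z2 : inT0 R x M ->
  same_rel (x, y1) (x, y2) -> same_rel (y1, z1) (y2, z2) ->
  same_rel (x, z1) (x, z2) ->
  M (enum_rank y1) (enum_rank z1) = M (enum_rank y2) (enum_rank z2).
Proof.
move=> [coef ->] xy yz xz; rewrite !summxE; apply: eq_bigr => i _.
rewrite !summxE; apply: eq_bigr => j _; rewrite !summxE; apply: eq_bigr => l _.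
by rewrite [LHS]mxE [RHS]mxE !dual_adj_dual_entry !enum_rankK xy yz xz.
Qed.

Lemma pnum1_unique i j l z : pnum R i j l = 1%N -> z \in nbhd x l ->
  exists w0, [set w | ((x, w) \in R i) && ((w, z) \in R j)] = [set w0].
Proof.
move=> p1; rewrite inE => /(pnumE i j) pE; apply/cards1P.
by rewrite -[#|_|]/(pcount R i j x z) -pE p1.
Qed.

Lemma dual_adj_dual_graphmx i j l : pnum R i j l = 1%N ->
  exists2 h : X -> X, {in nbhd x l, forall z, h z \in nbhd x i} &
    dualidem R F x i *m adjmx R F j *m dualidem R F x l =
    graphmx F (nbhd x l) h.
Proof.
move=> p1; pose h z := odflt z [pick w | ((x, w) \in R i) && ((w, z) \in R j)].
have hE z : z \in nbhd x l ->
    forall w, ((x, w) \in R i) && ((w, z) \in R j) = (w == h z).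
  move=> /(pnum1_unique p1) [w0 w0E].
  have w0P w : ((x, w) \in R i) && ((w, z) \in R j) = (w == w0).
    by rewrite -in_set1 -w0E inE.
  rewrite /h; case: pickP => [w' | /(_ w0)]; last by rewrite w0P eqxx.
  by rewrite w0P => /eqP -> w; rewrite w0P.
exists h => [z /hE/(_ (h z)) | ].
  by rewrite eqxx inE => /andP [].
apply/matrixP => r s; rewrite dual_adj_dual_entry mxE [enum_val s \in _]inE.
have [sl | _] := boolP ((x, enum_val s) \in R l); last by rewrite mulr0.
by rewrite mulr1 -natrM mulnb hE ?inE.
Qed.

Section Chain.
Variables (a : nat) (i j l : nat -> 'I_d.+1).
Hypothesis chain_pnum1 : forall b, (b <= a)%N -> pnum R (i b) (j b) (l b) = 1%N.
Hypothesis chain_link : forall c, (c < a)%N -> l c = i c.+1.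
Hypothesis T0_mul : forall M N : 'M[F]_#|X|,
  inT0 R x M -> inT0 R x N -> inT0 R x (M *m N).

Lemma chain_graphmx_inT0 n : (n <= a)%N ->
  exists2 H : X -> X, {in nbhd x (l n), forall z, H z \in nbhd x (i 0%N)} &
    inT0 R x (graphmx F (nbhd x (l n)) H).
Proof.
elim: n => [a0 | n IH na].
  have [h hi hE] := dual_adj_dual_graphmx (chain_pnum1 a0).
  by exists h; rewrite // -hE; apply: inT0_dual_adj_dual.
have [H Hi HT0] := IH (ltnW na).
have [h hi hE] := dual_adj_dual_graphmx (chain_pnum1 na).
have hl : {in nbhd x (l n.+1), forall z, h z \in nbhd x (l n)}.
  by rewrite (chain_link na).
exists (H \o h) => [z /hl/Hi // | ].
rewrite -(mul_graphmx _ _ hl) -hE.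
exact: T0_mul HT0 (inT0_dual_adj_dual _ _ _).
Qed.

End Chain.

Lemma graphmx_notin_T0 u v c (H : X -> X) z :
  (1 < #|nbhd x u|)%N -> z \in nbhd x v ->
  {in nbhd x u & nbhd x v, forall w z, (w, z) \in R c} ->
  {in nbhd x v, forall z, H z \in nbhd x u} ->
  ~ inT0 R x (graphmx F (nbhd x v) H).
Proof.
move=> u2 zv uvc Hvu T0H; have Hzu := Hvu z zv.
have [w wu wHz] : exists2 w, w \in nbhd x u & w != H z.
  have : (0 < #|nbhd x u :\ H z|)%N by move: u2; rewrite (cardsD1 (H z)) Hzu.
  by rewrite card_gt0 => /set0Pn [w]; rewrite in_setD1 => /andP [? ?]; exists w.
have xHz_xw : same_rel (x, H z) (x, w).
  by move: Hzu wu; rewrite !inE; apply: same_rel_mem.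
have := inT0_entry_same_rel T0H xHz_xw
  (same_rel_mem (uvc _ _ Hzu zv) (uvc _ _ wu zv)) (fun q => erefl).
by rewrite !mxE !enum_rankK zv eqxx (negbTE wHz) => /eqP; rewrite oner_eq0.
Qed.

End T0.
End Scheme.

Theorem lemma4p8 (X : finType) (d : nat) (R : 'I_d.+1 -> {set X * X})
  (F : fieldType) (x : X) :
  is_scheme R -> T0_unital_subalgebra R F x ->
  forall u v : 'I_d.+1, ~ bad_pair R u v.
Proof.
move=> [_ [Rcover [Rdisj [Rdiag [Rtr Rreg]]]]] [_ T0mul] u v
  [a [_ [i [j [l [i0u lav chain link uv]]]]]].
have pnum1 b : (b <= a)%N -> pnum R (i b) (j b) (l b) = 1%N by move/chain => [].
have [H Hvu HT0] := chain_graphmx_inT0 Rreg pnum1 link T0mul (leqnn a).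
rewrite lav i0u in Hvu HT0.
have [c uvc] := cplx_card1_rel Rcover Rtr Rreg x uv.
have [u2 _ _] := chain 0%N isT; have [_ v2 _] := chain a (leqnn a).
rewrite i0u lav !(valencyE Rdiag Rtr Rreg x) in u2 v2.
have [z zv] : exists z, z \in nbhd R x v.
  by apply/set0Pn; rewrite -card_gt0 v2.
by apply: (graphmx_notin_T0 Rdisj _ zv uvc Hvu HT0); rewrite u2.
Qed.
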